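(* The saturation of a finite sample set is finite.
   Context: Basic terms are built from a countably infinite set of variables using binary $\cdot$, unary ${}'$ and constant $1$. Fix a countably infinite set of time variables. Samples are the formal expressions generated by the grammar $\alpha::=\kappa\mid t[\alpha]\mid\mathrm{suc}(\alpha)\mid\mathrm{last}(t)$, where $\kappa$ is a time variable and $t$ a basic term. Let $\leadsto$ be the binary relation on samples given by: $t[\alpha]\leadsto\alpha$; $\mathrm{suc}(\alpha)\leadsto\alpha$; $t[\alpha]\leadsto t[\mathrm{last}(t)]$; $(tu)[\alpha]\leadsto t[u[\alpha]]$; $t'[\alpha]\leadsto t[t'[\alpha]]$; $t'[\alpha]\leadsto t[\mathrm{suc}(t'[\alpha])]$. The saturation of a set $\Delta$ of samples is $\{\beta\mid\alpha\leadsto^*\beta\text{ for some }\alpha\in\Delta\}$, where $\leadsto^*$ is the reflexive transitive closure of $\leadsto$. *)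

From Stdlib Require Import List Relations.

Inductive term : Type :=
| tvar : nat -> term
| tmul : term -> term -> term
| tstar : term -> term
| tone : term.

Inductive sample : Type :=
| stime : nat -> sample
| sapp : term -> sample -> sample
| ssuc : sample -> sample
| slast : term -> sample.

Inductive step : sample -> sample -> Prop :=
| st_app_arg : forall t a, step (sapp t a) a
| st_suc : forall a, step (ssuc a) a
| st_last : forall t a, step (sapp t a) (sapp t (slast t))
| st_mul : forall t u a, step (sapp (tmul t u) a) (sapp t (sapp u a))
| st_star1 : forall t a, step (sapp (tstar t) a) (sapp t (sapp (tstar t) a))
| st_star2 : forall t a, step (sapp (tstar t) a) (sapp t (ssuc (sapp (tstar t) a))).

Definition saturation (Delta : sample -> Prop) (b : sample) : Prop :=
  exists a, Delta a /\ clos_refl_trans sample step a b.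

Definition finite_set (S : sample -> Prop) : Prop :=
  exists L : list sample, forall b, S b <-> In b L.

(* A sample is a stack of frames [t[_]] and [suc(_)] over a base.  A step either pops the top
   frame, replaces everything below a top frame [t[_]] by [last(t)], or unfolds the top frame
   [(tu)[_]] or [t'[_]] into frames built from subterms.  Hence every sample reachable from a
   finite set is a stack drawn from the finitely many unfoldings of the finitely many terms
   involved, placed over a subsample of the given samples or over some [last(t)]. *)

From Stdlib Require Import List Relations Classical.
Import ListNotations.

Lemma finite_set_incl (S : sample -> Prop) (M : list sample) :
  (forall b, S b -> In b M) -> finite_set S.
Proof.
  intros HSM.
  assert (Hrestrict : forall M', exists L, forall b, S b /\ In b M' <-> In b L).
  { induction M' as [|a M' [L HL]].
    - exists []; simpl; tauto.
    - destruct (classic (S a)) as [Ha|Ha].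
      + exists (a :: L); intros b; simpl; rewrite <- HL.
        split; [intros [Hb [<-|Hin]]|intros [<-|[Hb Hin]]]; auto.
      + exists L; intros b; simpl; rewrite <- HL.
        split; [intros [Hb [<-|Hin]]|intros [Hb Hin]]; tauto. }
  destruct (Hrestrict M) as [L HL].
  exists L; intros b; rewrite <- HL; split; [auto|tauto].
Qed.

Lemma saturation_incl (Delta G : sample -> Prop) :
  (forall a, Delta a -> G a) ->
  (forall x y, G x -> step x y -> G y) ->
  forall b, saturation Delta b -> G b.
Proof.
  intros HDG Hclosed b [a [Ha Hab]].
  apply HDG in Ha; clear HDG; induction Hab; eauto.
Qed.

Inductive frame := Fapp (t : term) | Fsuc.

Fixpoint plug (C : list frame) (b : sample) : sample :=
  match C with
  | [] => b
  | Fapp t :: C' => sapp t (plug C' b)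
  | Fsuc :: C' => ssuc (plug C' b)
  end.

Inductive ctx_step : list frame -> list frame -> Prop :=
| cs_pop f C : ctx_step (f :: C) C
| cs_mul t u C : ctx_step (Fapp (tmul t u) :: C) (Fapp t :: Fapp u :: C)
| cs_star1 t C : ctx_step (Fapp (tstar t) :: C) (Fapp t :: Fapp (tstar t) :: C)
| cs_star2 t C :
    ctx_step (Fapp (tstar t) :: C) (Fapp t :: Fsuc :: Fapp (tstar t) :: C).

Lemma ctx_step_app_inv C D C' :
  C <> [] -> ctx_step (C ++ D) C' -> exists C0, C' = C0 ++ D /\ ctx_step C C0.
Proof.
  destruct C as [|f C]; [congruence|]; intros _ Hs.
  inversion Hs; subst.
  - exists C; split; [reflexivity|constructor].
  - exists (Fapp t :: Fapp u :: C); split; [reflexivity|constructor].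
  - exists (Fapp t :: Fapp (tstar t) :: C); split; [reflexivity|constructor].
  - exists (Fapp t :: Fsuc :: Fapp (tstar t) :: C); split; [reflexivity|constructor].
Qed.

Lemma step_plug f C b y :
  step (plug (f :: C) b) y ->
  (exists C', ctx_step (f :: C) C' /\ y = plug C' b) \/
  (exists t, f = Fapp t /\ y = sapp t (slast t)).
Proof.
  destruct f as [t|]; simpl; intros Hs; inversion Hs; subst;
    solve [ right; eauto
          | left; eexists (_ :: _ :: _); split; [constructor|reflexivity]
          | left; eexists (_ :: _ :: _ :: _); split; [constructor|reflexivity]
          | left; exists C; split; [constructor|reflexivity] ].
Qed.

Fixpoint subterms (t : term) : list term :=
  t :: match t with
       | tmul u v => subterms u ++ subterms v
       | tstar u => subterms u
       | _ => []
       end.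

Lemma subterms_self t : In t (subterms t).
Proof. destruct t; left; reflexivity. Qed.

Lemma subterms_trans s t w : In t (subterms s) -> In w (subterms t) -> In w (subterms s).
Proof.
  induction s; simpl; intros Hts Hwt; destruct Hts as [<-|Hts]; auto; right.
  apply in_app_or in Hts; apply in_or_app; destruct Hts; eauto.
Qed.

(* The contexts reachable from [t[_]] by popping and unfolding frames.  Since [u'[_]] unfolds
   to [u[u'[_]]] or [u[suc(u'[_])]], an unfolding of [u'] is an unfolding of [u] stacked on
   [u'[_]] or on [suc(u'[_])]. *)
Fixpoint unfoldings (t : term) : list (list frame) :=
  [] :: [Fapp t] ::
  match t with
  | tmul u v => map (fun C => C ++ [Fapp v]) (unfoldings u) ++ unfoldings v
  | tstar u => map (fun C => C ++ [Fapp t]) (unfoldings u)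
               ++ map (fun C => C ++ [Fsuc; Fapp t]) (unfoldings u)
  | _ => []
  end.

Lemma unfoldings_nil t : In [] (unfoldings t).
Proof. destruct t; left; reflexivity. Qed.

Lemma unfoldings_self t : In [Fapp t] (unfoldings t).
Proof. destruct t; right; left; reflexivity. Qed.

Lemma unfoldings_step_self t C' : ctx_step [Fapp t] C' -> In C' (unfoldings t).
Proof.
  intros Hs; inversion Hs; subst; [apply unfoldings_nil| | |];
    simpl; right; right; apply in_or_app; [left|left|right];
    apply in_map_iff; eexists; (split; [|apply unfoldings_self]); reflexivity.
Qed.

Lemma map_app_closed (l : list (list frame)) D C C' :
  (forall C C', In C l -> ctx_step C C' -> In C' l) ->
  In C l -> C <> [] -> ctx_step (C ++ D) C' -> In C' (map (fun C => C ++ D) l).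
Proof.
  intros Hl HC Hne Hs.
  destruct (ctx_step_app_inv C D C' Hne Hs) as [C0 [-> Hs0]].
  apply (in_map (fun C => C ++ D)); eauto.
Qed.

Lemma unfoldings_closed t C C' : In C (unfoldings t) -> ctx_step C C' -> In C' (unfoldings t).
Proof.
  revert C C'; induction t as [n|u IHu v IHv|u IHu|]; intros C C' HC Hs;
    destruct HC as [<-|[<-|HC]]; try solve [inversion Hs | exact (unfoldings_step_self _ _ Hs)];
    try contradiction; apply in_app_or in HC.
  - destruct HC as [HC|HC]; simpl; right; right; apply in_or_app.
    + apply in_map_iff in HC as [[|f C0] [<- HC]].
      * right; exact (IHv _ _ (unfoldings_self v) Hs).
      * left; apply map_app_closed with (f :: C0); auto; discriminate.
    + right; eauto.
  - destruct HC as [HC|HC]; apply in_map_iff in HC as [[|f C0] [<- HC]].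
    + exact (unfoldings_step_self _ _ Hs).
    + simpl; right; right; apply in_or_app.
      left; apply map_app_closed with (f :: C0); auto; discriminate.
    + inversion Hs; subst; apply unfoldings_self.
    + simpl; right; right; apply in_or_app.
      right; apply map_app_closed with (f :: C0); auto; discriminate.
Qed.

Lemma unfoldings_head_subterm t w C :
  In (Fapp w :: C) (unfoldings t) -> In w (subterms t).
Proof.
  revert C; induction t as [n|u IHu v IHv|u IHu|]; intros C HC;
    destruct HC as [E|[E|HC]]; try discriminate; try contradiction;
    try (injection E as -> _; apply subterms_self); apply in_app_or in HC.
  - simpl; right; apply in_or_app; destruct HC as [HC|HC].
    + apply in_map_iff in HC as [[|f C0] [E HC]]; injection E as E _; subst.
      * right; apply subterms_self.
      * left; eauto.
    + right; eauto.
  - destruct HC as [HC|HC]; apply in_map_iff in HC as [[|f C0] [E HC]];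
      try discriminate; injection E as E _; subst; simpl; try (left; reflexivity);
      right; eauto.
Qed.

Fixpoint subsamples (a : sample) : list sample :=
  a :: match a with
       | sapp _ b | ssuc b => subsamples b
       | _ => []
       end.

Lemma subsamples_self a : In a (subsamples a).
Proof. destruct a; left; reflexivity. Qed.

Lemma subsamples_trans a b c :
  In b (subsamples a) -> In c (subsamples b) -> In c (subsamples a).
Proof.
  induction a; simpl; intros Hba Hcb; destruct Hba as [<-|Hba]; auto; right; eauto.
Qed.

Definition head_term (a : sample) : list term :=
  match a with sapp t _ => [t] | _ => [] end.

Section Seeds.

Variable L : list sample.

Definition seed_samples : list sample := flat_map subsamples L.

Definition seed_terms : list term :=
  flat_map subterms (flat_map head_term seed_samples).

Definition seed_bases : list sample := seed_samples ++ map slast seed_terms.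

Definition seed_contexts : list (list frame) := [] :: flat_map unfoldings seed_terms.

Definition shaped (g : sample) : Prop :=
  exists C b, g = plug C b /\ In C seed_contexts /\ In b seed_bases.

Lemma seed_samples_closed b c :
  In b seed_samples -> In c (subsamples b) -> In c seed_samples.
Proof.
  unfold seed_samples; intros Hb Hc; apply in_flat_map in Hb as [a [Ha Hb]].
  apply in_flat_map; eauto using subsamples_trans.
Qed.

Lemma seed_bases_samples b : In b seed_samples -> In b seed_bases.
Proof. intros Hb; apply in_or_app; left; exact Hb. Qed.

Lemma seed_terms_app t x : In (sapp t x) seed_samples -> In t seed_terms.
Proof.
  intros H; apply in_flat_map; exists t; split; [|apply subterms_self].
  apply in_flat_map; exists (sapp t x); split; [exact H|left; reflexivity].
Qed.

Lemma seed_terms_closed t w : In t seed_terms -> In w (subterms t) -> In w seed_terms.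
Proof.
  unfold seed_terms; intros Ht Hw; apply in_flat_map in Ht as [s [Hs Ht]].
  apply in_flat_map; eauto using subterms_trans.
Qed.

Lemma seed_contexts_self t : In t seed_terms -> In [Fapp t] seed_contexts.
Proof. intros Ht; right; apply in_flat_map; eauto using unfoldings_self. Qed.

Lemma seed_contexts_closed C C' :
  In C seed_contexts -> ctx_step C C' -> In C' seed_contexts.
Proof.
  intros [<-|HC] Hs; [inversion Hs|].
  apply in_flat_map in HC as [t [Ht HC]].
  right; apply in_flat_map; eauto using unfoldings_closed.
Qed.

Lemma seed_contexts_head w C : In (Fapp w :: C) seed_contexts -> In w seed_terms.
Proof.
  intros [E|HC]; [discriminate|].
  apply in_flat_map in HC as [t [Ht HC]].
  eauto using seed_terms_closed, unfoldings_head_subterm.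
Qed.

Lemma shaped_seed a : In a L -> shaped a.
Proof.
  intros Ha; exists [], a; repeat split; [left; reflexivity|].
  apply seed_bases_samples, in_flat_map; eauto using subsamples_self.
Qed.

Lemma shaped_step_ctx f C b y :
  In (f :: C) seed_contexts -> In b seed_bases -> step (plug (f :: C) b) y -> shaped y.
Proof.
  intros HC Hb Hs.
  destruct (step_plug f C b y Hs) as [[C' [Hs' ->]]|[t [-> ->]]].
  - exists C', b; eauto using seed_contexts_closed.
  - assert (Ht : In t seed_terms) by eauto using seed_contexts_head.
    exists [Fapp t], (slast t); repeat split; auto using seed_contexts_self.
    apply in_or_app; right; apply in_map, Ht.
Qed.

Lemma shaped_step x y : shaped x -> step x y -> shaped y.
Proof.
  intros [[|f C] [b [-> [HC Hb]]]] Hs; [|eauto using shaped_step_ctx].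
  apply in_app_or in Hb as [Hb|Hb].
  - destruct b as [n|t x|x|t]; try solve [inversion Hs].
    + assert (Hx : In x seed_samples).
      { apply seed_samples_closed with (sapp t x); [exact Hb|right; apply subsamples_self]. }
      apply shaped_step_ctx with (f := Fapp t) (C := []) (b := x);
        eauto using seed_contexts_self, seed_terms_app, seed_bases_samples.
    + inversion Hs; subst; exists [], y; repeat split; [left; reflexivity|].
      apply seed_bases_samples, seed_samples_closed with (ssuc y);
        [exact Hb|right; apply subsamples_self].
  - apply in_map_iff in Hb as [t [<- _]]; inversion Hs.
Qed.

Definition shaped_samples : list sample :=
  flat_map (fun C => map (plug C) seed_bases) seed_contexts.

Lemma shaped_in_samples g : shaped g -> In g shaped_samples.
Proof.
  intros [C [b [-> [HC Hb]]]]; apply in_flat_map; exists C; split; [exact HC|].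
  apply in_map, Hb.
Qed.

End Seeds.

Theorem lemma3p2 (Delta : sample -> Prop) :
  finite_set Delta -> finite_set (saturation Delta).
Proof.
  intros [L HL].
  apply finite_set_incl with (shaped_samples L).
  intros g Hg; apply shaped_in_samples; revert g Hg.
  apply saturation_incl; [|apply shaped_step].
  intros a Ha; apply shaped_seed, HL, Ha.
Qed.
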